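(* Let $P(\lambda)=\begin{bmatrix} A(\lambda) & B(\lambda)\\ -C(\lambda) & D(\lambda)\end{bmatrix}$ be a polynomial system matrix of a rational matrix $G(\lambda)\in\mathbb F(\lambda)^{p\times m}$, with $A(\lambda)\in\mathbb F[\lambda]^{n\times n}$. (a) If $A(\lambda)$ and $C(\lambda)$ are right coprime, $A(\lambda)^{-1}B(\lambda)$ is proper and $\begin{bmatrix} H_1(\lambda)\\ H_2(\lambda)\end{bmatrix}\in\mathbb F[\lambda]^{(n+m)\times l}$ is a right minimal basis of $P(\lambda)$, then $H_2(\lambda)$ is a right minimal basis of $G(\lambda)$ and $H_1(\lambda)=-A(\lambda)^{-1}B(\lambda)H_2(\lambda)$. Moreover, the right minimal indices of $P(\lambda)$ and $G(\lambda)$ are the same. (b) If $A(\lambda)$ and $B(\lambda)$ are left coprime, $C(\lambda)A(\lambda)^{-1}$ is proper and $\begin{bmatrix} H_1(\lambda)\\ H_2(\lambda)\end{bmatrix}\in\mathbb F[\lambda]^{(n+p)\times q}$ is a left minimal basis of $P(\lambda)$, then $H_2(\lambda)$ is a left minimal basis of $G(\lambda)$ and $H_1(\lambda)=(C(\lambda)A(\lambda)^{-1})^TH_2(\lambda)$. Moreover, the left minimal indices of $P(\lambda)$ and $G(\lambda)$ are the same.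
   Context: $\mathbb F$ is an arbitrary field, $\overline{\mathbb F}$ its algebraic closure. A polynomial system matrix of $G(\lambda)\in\mathbb F(\lambda)^{p\times m}$ is a polynomial matrix $P(\lambda)=\begin{bmatrix} A(\lambda) & B(\lambda)\\ -C(\lambda) & D(\lambda)\end{bmatrix}$ with $A(\lambda)\in\mathbb F[\lambda]^{n\times n}$ regular, $B\in\mathbb F[\lambda]^{n\times m}$, $C\in\mathbb F[\lambda]^{p\times n}$, $D\in\mathbb F[\lambda]^{p\times m}$, and $G=D+CA^{-1}B$. Polynomial matrices $A\in\mathbb F[\lambda]^{n\times n}$, $C\in\mathbb F[\lambda]^{p\times n}$ are right coprime if every common right divisor is unimodular (equivalently $\begin{bmatrix}A(\lambda_0)\\ C(\lambda_0)\end{bmatrix}$ has full column rank for all $\lambda_0\in\overline{\mathbb F}$); $A,B$ are left coprime if $A^T,B^T$ are right coprime. A rational matrix is proper if every entry has numerator degree at most denominator degree. For a subspace $\mathcal V\subseteq\mathbb F(\lambda)^k$, the order of a polynomial basis is the sum of the degrees of its vectors; a minimal basis is a polynomial basis of least order; the minimal indices of $\mathcal V$ are the degrees of the vectors of a minimal basis (well defined). A polynomial matrix is a right (resp. left) minimal basis of a rational matrix $G$ if its columns form a minimal basis of $\mathcal N_r(G)=\{x: Gx=0\}$ (resp. $\mathcal N_\ell(G)=\{x: x^TG=0\}$); the right (left) minimal indices of $G$ are the minimal indices of $\mathcal N_r(G)$ ($\mathcal N_\ell(G)$). *)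

From HB Require Import structures.
From mathcomp Require Import all_boot all_order all_algebra fraction.
Set Implicit Arguments. Unset Strict Implicit. Unset Printing Implicit Defensive.
Import Order.TTheory GRing.Theory Num.Theory.
Local Open Scope ring_scope.

Notation ratF F := {fraction {poly F}}.

Definition tofracP (F : fieldType) (x : {poly F}) : ratF F :=
  @FracField.tofrac _ x.

Definition toK (F : fieldType) (m n : nat) (M : 'M[{poly F}]_(m, n))
  : 'M[ratF F]_(m, n) := map_mx (@tofracP F) M.

Definition regular_pmx (F : fieldType) (n : nat) (A : 'M[{poly F}]_n) :=
  \det A != 0.

Definition unimodular (F : fieldType) (n : nat) (U : 'M[{poly F}]_n) :=
  U \in unitmx.

Definition right_coprime (F : fieldType) (n p : nat)
  (A : 'M[{poly F}]_n) (C : 'M[{poly F}]_(p, n)) :=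
  forall (R : 'M[{poly F}]_n) (A' : 'M[{poly F}]_n) (C' : 'M[{poly F}]_(p, n)),
    A = A' *m R -> C = C' *m R -> unimodular R.

Definition left_coprime (F : fieldType) (n m : nat)
  (A : 'M[{poly F}]_n) (B : 'M[{poly F}]_(n, m)) :=
  right_coprime A^T B^T.

Definition proper_rat (F : fieldType) (x : ratF F) :=
  exists (a b : {poly F}), b != 0 /\ x = tofracP a / tofracP b /\ (size a <= size b)%N.

Definition proper_mx (F : fieldType) (m n : nat) (M : 'M[ratF F]_(m, n)) :=
  forall i j, proper_rat (M i j).

Definition vdeg (F : fieldType) (k : nat) (v : 'cV[{poly F}]_k) : nat :=
  \max_(i < k) (size (v i ord0)).-1.

Definition col_degs (F : fieldType) (k l : nat) (H : 'M[{poly F}]_(k, l))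
  : seq nat := [seq vdeg (col j H) | j <- enum 'I_l].

Definition order_basis (F : fieldType) (k l : nat) (H : 'M[{poly F}]_(k, l))
  : nat := \sum_(j < l) vdeg (col j H).

Definition poly_basis (F : fieldType) (k : nat) (V : 'cV[ratF F]_k -> Prop)
  (l : nat) (H : 'M[{poly F}]_(k, l)) :=
  \rank (toK H) = l /\
  (forall x : 'cV[ratF F]_k, V x <-> exists y : 'cV[ratF F]_l, x = toK H *m y).

Definition minimal_basis (F : fieldType) (k : nat) (V : 'cV[ratF F]_k -> Prop)
  (l : nat) (H : 'M[{poly F}]_(k, l)) :=
  poly_basis V H /\
  forall (l' : nat) (H' : 'M[{poly F}]_(k, l')),
    poly_basis V H' -> (order_basis H <= order_basis H')%N.

Definition null_r (F : fieldType) (p k : nat) (G : 'M[ratF F]_(p, k))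
  : 'cV[ratF F]_k -> Prop := fun x => G *m x = 0.
Definition null_l (F : fieldType) (k m : nat) (G : 'M[ratF F]_(k, m))
  : 'cV[ratF F]_k -> Prop := fun x => x^T *m G = 0.

Definition right_minimal_basis (F : fieldType) (p k l : nat)
  (G : 'M[ratF F]_(p, k)) (H : 'M[{poly F}]_(k, l)) :=
  minimal_basis (null_r G) H.
Definition left_minimal_basis (F : fieldType) (k m l : nat)
  (G : 'M[ratF F]_(k, m)) (H : 'M[{poly F}]_(k, l)) :=
  minimal_basis (null_l G) H.

Definition same_right_min_indices (F : fieldType) (p1 k1 p2 k2 : nat)
  (G1 : 'M[ratF F]_(p1, k1)) (G2 : 'M[ratF F]_(p2, k2)) :=
  forall (l1 l2 : nat) (M1 : 'M[{poly F}]_(k1, l1)) (M2 : 'M[{poly F}]_(k2, l2)),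
    right_minimal_basis G1 M1 -> right_minimal_basis G2 M2 ->
    perm_eq (col_degs M1) (col_degs M2).

Definition same_left_min_indices (F : fieldType) (k1 m1 k2 m2 : nat)
  (G1 : 'M[ratF F]_(k1, m1)) (G2 : 'M[ratF F]_(k2, m2)) :=
  forall (l1 l2 : nat) (M1 : 'M[{poly F}]_(k1, l1)) (M2 : 'M[{poly F}]_(k2, l2)),
    left_minimal_basis G1 M1 -> left_minimal_basis G2 M2 ->
    perm_eq (col_degs M1) (col_degs M2).

Definition sys_mx (F : fieldType) (n m p : nat) (A : 'M[{poly F}]_n)
  (B : 'M[{poly F}]_(n, m)) (C : 'M[{poly F}]_(p, n)) (D : 'M[{poly F}]_(p, m))
  : 'M[{poly F}]_(n + p, n + m) := block_mx A B (- C) D.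

Definition is_system_matrix_of (F : fieldType) (n m p : nat) (A : 'M[{poly F}]_n)
  (B : 'M[{poly F}]_(n, m)) (C : 'M[{poly F}]_(p, n)) (D : 'M[{poly F}]_(p, m))
  (G : 'M[ratF F]_(p, m)) :=
  regular_pmx A /\ G = toK D + toK C *m invmx (toK A) *m toK B.

From HB Require Import structures.
From mathcomp Require Import all_boot all_order all_algebra fraction.
From mathcomp Require Import zify ring.
From Stdlib Require Import Classical.
Set Implicit Arguments. Unset Strict Implicit. Unset Printing Implicit Defensive.
Import GRing.Theory.
Local Open Scope ring_scope.

(* A rational vector [x1; x2] lies in the right null space of P iff
   [x1 = - A^-1 B x2] and [G x2 = 0], so stacking [- A^-1 B H2] on top of H2
   turns polynomial bases of N_r(G) into bases of N_r(P) and back.  Properness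
   of A^-1 B makes the top block of each column no higher in degree than the
   bottom one, so this correspondence preserves column degrees and orders.  It
   stays polynomial because A and C are right coprime: an irreducible factor of
   a denominator of A^-1 B x2 would yield a common right divisor of A and C that
   is not unimodular.  Hence minimal bases correspond, and the minimal indices,
   being the degrees of any minimal basis, agree.  Part (b) is part (a) for the
   transposed system matrix [A^T, -C^T; B^T, D^T]. *)

Lemma irreducible_factor (F : fieldType) (q : {poly F}) :
  (1 < size q)%N -> exists2 r : {poly F}, irreducible_poly r & r %| q.
Proof.
have [N] := ubnP (size q); elim: N => // N IH in q *; rewrite ltnS => sqN sq1.
have [q_irr|q_red] := classic (irreducible_poly q); first by exists q.
have q0 : q != 0 by rewrite -size_poly_gt0 (ltn_trans _ sq1).
have [d [sd1 dq ndq]] : exists d : {poly F}, [/\ size d != 1%N, d %| q & ~~ (d %= q)].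
  apply: NNPP => nd; apply: q_red; split=> // d sd1 dq.
  by apply/negPn/negP => ndq; apply: nd; exists d.
have d0 : d != 0 by apply: contraTneq dq => ->; rewrite dvd0p.
have sdq : (size d < size q)%N.
  by rewrite ltn_neqAle (dvdp_size_eqp dq) ndq dvdp_leq.
have sd : (1 < size d)%N by move: sd1 d0; rewrite -size_poly_gt0; case: size => [|[]].
have [r r_irr rd] := IH d (leq_trans sdq sqN) sd.
by exists r => //; apply: dvdp_trans dq.
Qed.

Lemma scale_divp_mx (F : fieldType) k l (d : {poly F}) (M : 'M[{poly F}]_(k, l)) :
  (forall i j, d %| M i j) -> M = d *: map_mx (fun a => a %/ d) M.
Proof. by move=> dM; apply/matrixP=> i j; rewrite !mxE divpKC. Qed.

Lemma tr_delta_mulmx (R : pzRingType) k (i : 'I_k) (y : 'cV[R]_k) :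
  (delta_mx i 0)^T *m y = (y i 0)%:M.
Proof. by rewrite trmx_delta -rowE; apply/matrixP=> a b; rewrite !ord1 !mxE eqxx. Qed.

Section ColumnFactor.
Variables (R : comPzRingType) (k n : nat) (i : 'I_n).
Local Notation e := (delta_mx i 0 : 'cV[R]_n).

Lemma mulmx_col_factor (X : 'M[R]_(k, n)) (a : R) (y : 'cV_n) (w : 'cV_k) :
  y i 0 = 1 -> X *m y = a *: w ->
  X = (X + (w - X *m e) *m e^T) *m (1%:M + (a *: e - y) *m e^T).
Proof.
move=> y1 Xy; have eu : e^T *m (a *: e - y) = a%:M - 1%:M.
  by rewrite mulmxBr -scalemxAr !tr_delta_mulmx y1 mxE eqxx scalemx1.
have Xu : X *m (a *: e - y) = - (a *: (w - X *m e)).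
  by rewrite mulmxBr -scalemxAr Xy scalerBr opprB.
move: (w - _) (e^T) eu Xu => b E eu Xu.
rewrite mulmxDr mulmx1 mulmxA mulmxDl Xu -(mulmxA b) eu mulmxBr mulmx1.
rewrite mul_mx_scalar -addrA -[LHS]addr0; congr (_ + _).
by rewrite addrA addNr add0r mulNmx subrr.
Qed.
End ColumnFactor.

Lemma rank_one_update_unit (K : fieldType) k (u v : 'cV[K]_k) :
  1 + (v^T *m u) 0 0 != 0 -> 1%:M + u *m v^T \in unitmx.
Proof.
move=> s0; set c := (1 + (v^T *m u) 0 0)^-1.
suff /mulmx1_unit[] : (1%:M + u *m v^T) *m (1%:M - c *: (u *m v^T)) = 1%:M by [].
rewrite mulmxDl mul1mx mulmxBr mulmx1 -scalemxAr mulmxA -(mulmxA u).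
rewrite [v^T *m u]mx11_scalar mul_mx_scalar -scalemxAl scalerA.
rewrite -addrA -[RHS]addr0; congr (_ + _).
rewrite addrA -scaleNr -{2}[u *m v^T]scale1r -scalerDl -scalerBl.
suff -> : - c + 1 - c * (v^T *m u) 0 0 = 0 by rewrite scale0r.
by rewrite /c; field.
Qed.

Lemma row_free_rowsub (K : fieldType) m m' n (f : 'I_m' -> 'I_m) (W : 'M[K]_(m, n)) :
  injective f -> row_free W -> row_free (rowsub f W).
Proof.
move=> f_inj W_free; rewrite rowsubE /row_free mxrankMfree // eqn_leq rank_leq_row /=.
have orth : rowsub f 1%:M *m (rowsub f 1%:M)^T = 1%:M :> 'M[K]_m'.
  by apply/matrixP=> a b; rewrite mul_rowsub_mx mul1mx trmx_mxsub trmx1 !mxE (inj_eq f_inj).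
by rewrite -{1}(mxrank1 K m') -orth mxrankM_maxl.
Qed.

Lemma mxrank_col_mx1_mul (K : fieldType) k m l (Y : 'M[K]_(k, m)) (M : 'M[K]_(m, l)) :
  \rank (col_mx Y 1%:M *m M) = \rank M.
Proof.
have e : row_mx 0 1%:M *m (col_mx Y 1%:M *m M) = M.
  by rewrite mulmxA mul_row_col mul0mx add0r !mul1mx.
by apply/eqP; rewrite eqn_leq mxrankM_maxr -{1}e mxrankM_maxr.
Qed.

Lemma perm_eq_count_leq (s1 s2 : seq nat) :
  (forall x, count (leq^~ x) s1 = count (leq^~ x) s2) -> perm_eq s1 s2.
Proof.
have count_leq x s : count (leq^~ x) s = (count (ltn^~ x) s + count_mem x s)%N.
  by elim: s => //= y s ->; rewrite addnACA; congr (_ + _)%N; case: ltngtP.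
move=> cnt; apply/allP => x _ /=.
have cnt_lt : count (ltn^~ x) s1 = count (ltn^~ x) s2.
  case: x => [|x]; last exact: cnt.
  by rewrite !(@eq_count _ _ pred0) ?count_pred0 // => y; rewrite ltn0.
by rewrite -(eqn_add2l (count (ltn^~ x) s1)) -count_leq cnt_lt -count_leq cnt.
Qed.

(** * Right coprime pairs *)

Section RightCoprimeDvd.
Variables (F : fieldType) (n p : nat).
Variables (A : 'M[{poly F}]_n) (C : 'M[{poly F}]_(p, n)).
Hypothesis AC_coprime : right_coprime A C.

(* If [pi] does not divide [z i0], a Bezout combination [y] of [z] and [e_i0]
   has [y i0 = 1] and [A y, C y = 0 mod pi]; then [A] and [C] share the right
   divisor of [mulmx_col_factor], which maps [y] to [pi e_i0] and so cannot be
   unimodular. *)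
Lemma right_coprime_irreducible_dvd (pi : {poly F}) (z : 'cV_n) :
  irreducible_poly pi ->
  (forall i, pi %| (A *m z) i 0) -> (forall i, pi %| (C *m z) i 0) ->
  forall i, pi %| z i 0.
Proof.
move=> pi_irr dAz dCz i0; apply/negPn/negP => ndz.
have [[u1 u2] /= bezout] : exists u : {poly F} * {poly F}, u.1 * pi + u.2 * z i0 0 = 1.
  by apply/Bezout_eq1_coprimepP; rewrite irreducible_poly_coprime.
set e : 'cV[{poly F}]_n := delta_mx i0 0.
set y := u2 *: z + (u1 * pi) *: e.
have y1 : y i0 0 = 1 by rewrite !mxE eqxx mulr1 addrC.
have dvd_y k (X : 'M_(k, n)) :
    (forall i, pi %| (X *m z) i 0) -> forall i j, pi %| (X *m y) i j.
  move=> dXz i j; move: (dXz i); rewrite (ord1 j) mulmxDr -!scalemxAr !mxE.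
  by move=> dz; rewrite -mulrA; apply: dvdp_add; apply: dvdp_mull; rewrite ?dvdp_mulIl.
have eA := mulmx_col_factor y1 (scale_divp_mx (dvd_y _ _ dAz)).
have eC := mulmx_col_factor y1 (scale_divp_mx (dvd_y _ _ dCz)).
set R := (1%:M + _) in eA eC.
have R_unit : R \in unitmx := AC_coprime eA eC.
have Ry : R *m y = pi *: e.
  by rewrite mulmxDl mul1mx -mulmxA tr_delta_mulmx y1 mulmx1 addrC subrK.
have : pi %| y i0 0.
  by rewrite -[y](mulKmx R_unit) Ry -scalemxAr mxE dvdp_mulIl.
by rewrite y1 dvdp1 gtn_eqF //; case: pi_irr.
Qed.

Lemma right_coprime_dvd k (Z : 'M[{poly F}]_(n, k)) (q : {poly F}) : q != 0 ->
  (forall i j, q %| (A *m Z) i j) -> (forall i j, q %| (C *m Z) i j) ->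
  forall i j, q %| Z i j.
Proof.
have [N] := ubnP (size q); elim: N => // N IH in q Z *.
rewrite ltnS => sqN q0 dAZ dCZ.
have [sq1|sq1] := leqP (size q) 1.
  have : q %= 1 by rewrite -size_poly_eq1 eqn_leq sq1 size_poly_gt0.
  by move=> /eqp_dvdl dq i j; rewrite dq dvd1p.
have [pi pi_irr piq] := irreducible_factor sq1.
have pi0 : pi != 0 := irredp_neq0 pi_irr.
have dvd_col X j : (forall i j, q %| (X *m Z) i j) -> forall i, pi %| (X *m col j Z) i 0.
  by move=> dXZ i; rewrite colE mulmxA -colE mxE (dvdp_trans piq).
have piZ i j : pi %| Z i j.
  have := right_coprime_irreducible_dvd pi_irr (dvd_col _ _ j dAZ) (dvd_col _ _ j dCZ) i.
  by rewrite mxE.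
have [q' eq] : exists q' : {poly F}, q = pi * q' by exists (q %/ pi); rewrite divpKC.
rewrite eq in q0 sqN dAZ dCZ *.
have q'0 : q' != 0 by apply: contraNneq q0 => ->; rewrite mulr0.
have sq' : (size q' < N)%N.
  move: sqN; rewrite size_mul //; case: pi_irr => + _.
  case: (size pi) => [|[|s]] // _; rewrite !addSn.
  by apply: leq_trans; rewrite ltnS leq_addl.
move: (scale_divp_mx piZ) dAZ dCZ => -> dAZ dCZ i j.
rewrite mxE dvdp_mul2l //; apply: IH => // {}i {}j.
  by move: (dAZ i j); rewrite -scalemxAr mxE dvdp_mul2l.
by move: (dCZ i j); rewrite -scalemxAr mxE dvdp_mul2l.
Qed.
End RightCoprimeDvd.

Section PolyToFrac.
Variable F : fieldType.
Local Notation tf := (@FracField.tofrac {poly F}).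

Lemma toKE k l (M : 'M[{poly F}]_(k, l)) : toK M = map_mx tf M.
Proof. by []. Qed.

Lemma toK_inj k l : injective (@toK F k l).
Proof.
move=> M N /matrixP eMN; apply/matrixP=> i j.
by move: (eMN i j); rewrite !mxE => /eqP; rewrite tofrac_eq => /eqP.
Qed.

Lemma toK_unitmx n (A : 'M[{poly F}]_n) : \det A != 0 -> toK A \in unitmx.
Proof. by rewrite unitmxE toKE det_map_mx unitfE tofrac_eq0. Qed.

Lemma invmx_toK n (A : 'M[{poly F}]_n) : \det A != 0 ->
  invmx (toK A) = (tf (\det A))^-1 *: toK (\adj A).
Proof. by move=> dA; rewrite /invmx toK_unitmx // !toKE det_map_mx map_mx_adj. Qed.

(* Clearing the denominator [det A] of [- A^-1 B U] gives [Z := - adj A B U]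
   with [det A] dividing [A Z] and [C Z]; right coprimeness then lets us divide
   [Z] by [det A]. *)
Lemma right_coprime_poly_state n m p (A : 'M[{poly F}]_n) (B : 'M[{poly F}]_(n, m))
    (C : 'M[{poly F}]_(p, n)) (D : 'M[{poly F}]_(p, m)) l (U : 'M[{poly F}]_(m, l)) :
  right_coprime A C -> \det A != 0 ->
  (toK D + toK C *m invmx (toK A) *m toK B) *m toK U = 0 ->
  exists X : 'M[{poly F}]_(n, l), toK X = - (invmx (toK A) *m toK B *m toK U).
Proof.
move=> AC_coprime dA GU0; set a := \det A.
have a0 : tf a != 0 by rewrite tofrac_eq0.
set Z := - (\adj A *m B *m U).
have eZ : toK Z = tf a *: - (invmx (toK A) *m toK B *m toK U).
  rewrite invmx_toK // -!scalemxAl scalerN scalerA mulfV // scale1r.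
  by rewrite !toKE map_mxN !map_mxM.
have dAZ i j : a %| (A *m Z) i j.
  by rewrite mulmxN !mulmxA mul_mx_adj mul_scalar_mx -scalemxAl !mxE dvdpNr dvdp_mulr.
have CZ : C *m Z = a *: (D *m U).
  apply: toK_inj; rewrite toKE map_mxM -!toKE eZ -scalemxAr !toKE map_mxZ map_mxM.
  congr (_ *: _); move: GU0; rewrite mulmxDl mulmxN => /eqP; rewrite addr_eq0 => /eqP ->.
  by rewrite !mulmxA.
have dCZ i j : a %| (C *m Z) i j by rewrite CZ mxE dvdp_mulr.
exists (map_mx (fun x => x %/ a) Z); apply: (scalerI a0).
by rewrite -eZ {2}(scale_divp_mx (right_coprime_dvd AC_coprime dA dAZ dCZ)) !toKE map_mxZ.
Qed.
End PolyToFrac.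

(** * Proper rational matrices *)

Section Properness.
Variable F : fieldType.
Local Notation tf := (@FracField.tofrac {poly F}).

Lemma proper_sum_mul (I : Type) (r : seq I) (a : I -> {fraction {poly F}})
    (h : I -> {poly F}) (d : nat) :
  (forall j, proper_rat (a j)) -> (forall j, (size (h j) <= d.+1)%N) ->
  exists N b : {poly F},
    [/\ b != 0, \sum_(j <- r) a j * tf (h j) = tf N / tf b & (size N <= size b + d)%N].
Proof.
move=> a_proper hd; elim: r => [|j r [N [b [b0 eN sN]]]].
  exists 0, 1; rewrite big_nil tofrac0 mul0r size_poly0 size_poly1.
  by split; rewrite ?oner_neq0.
have [a' [b' [b'0 [ea sa]]]] := a_proper j.
exists (a' * h j * b + N * b'), (b' * b); split; first by rewrite mulf_neq0.
  by rewrite big_cons eN ea mulrAC addf_div ?tofrac_eq0 // /tofracP -!tofracM -tofracD.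
rewrite size_mul //; apply: leq_trans (size_polyD _ _) _; rewrite geq_max.
have s1 := size_polyMleq (a' * h j) b; have s2 := size_polyMleq a' (h j).
have s3 := size_polyMleq N b'; have := hd j.
have := size_poly_gt0 b; have := size_poly_gt0 b'; rewrite b0 b'0.
move: s1 s2 s3 sN sa; rewrite -!subn1.
move: (size (a' * h j * b)%R) (size (a' * h j)%R) (size (N * b')%R) (size a')
  (size b') (size b) (size N) (size (h j)) => *; apply/andP; split; lia.
Qed.

Lemma vdeg_proper_mulmx n m (X : 'M[{fraction {poly F}}]_(n, m))
    (x : 'cV[{poly F}]_n) (h : 'cV[{poly F}]_m) :
  proper_mx X -> toK x = X *m toK h -> (vdeg x <= vdeg h)%N.
Proof.
move=> X_proper ex; apply/bigmax_leqP => i _.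
have hd j : (size (h j ord0) <= (vdeg h).+1)%N.
  have : ((size (h j ord0)).-1 <= vdeg h)%N by apply: (@leq_bigmax_cond _ _ _ j).
  by case: size.
have [N [b [b0 eN sN]]] := proper_sum_mul (index_enum 'I_m) (fun j => X_proper i j) hd.
move/matrixP: ex => /(_ i 0); rewrite !mxE; under eq_bigr do rewrite mxE.
rewrite eN /tofracP => exi.
have /eqP : tf (x i 0 * b) = tf N by rewrite tofracM exi mulfVK ?tofrac_eq0.
rewrite tofrac_eq => /eqP eNx.
have [->|xi0] := eqVneq (x i 0) 0; first by rewrite size_poly0.
move: sN; rewrite -eNx size_mul //.
move: (size (x i 0)) (size b) (size_poly_gt0 b) => u v; rewrite b0 => v0.
by case: u => //= u; lia.
Qed.
End Properness.

Lemma proper_mxN (F : fieldType) n m (X : 'M[{fraction {poly F}}]_(n, m)) :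
  proper_mx X -> proper_mx (- X).
Proof.
move=> X_proper i j; have [a [b [b0 [e s]]]] := X_proper i j.
by exists (- a), b; rewrite mxE e /tofracP tofracN mulNr size_polyN.
Qed.

Lemma proper_mx_tr (F : fieldType) n m (X : 'M[{fraction {poly F}}]_(n, m)) :
  proper_mx X -> proper_mx X^T.
Proof. by move=> X_proper i j; rewrite mxE. Qed.

Lemma vdeg_col_mx (F : fieldType) n m (x1 : 'cV[{poly F}]_n) (x2 : 'cV[{poly F}]_m) :
  vdeg (col_mx x1 x2) = maxn (vdeg x1) (vdeg x2).
Proof.
rewrite /vdeg big_split_ord /=.
by congr maxn; apply: eq_bigr => i _; rewrite ?col_mxEu ?col_mxEd.
Qed.

Section ProperStack.
Variables (F : fieldType) (n m l : nat) (X : 'M[{fraction {poly F}}]_(n, m)).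
Variables (H1 : 'M[{poly F}]_(n, l)) (H2 : 'M[{poly F}]_(m, l)).
Hypotheses (X_proper : proper_mx X) (eH1 : toK H1 = - (X *m toK H2)).

Lemma vdeg_col_col_mx_proper c : vdeg (col c (col_mx H1 H2)) = vdeg (col c H2).
Proof.
rewrite col_col_mx vdeg_col_mx; apply/maxn_idPr.
apply: vdeg_proper_mulmx (proper_mxN X_proper) _.
by rewrite !toKE !map_col -!toKE eH1 !colE !mulNmx mulmxA.
Qed.

Lemma order_basis_col_mx_proper : order_basis (col_mx H1 H2) = order_basis H2.
Proof. by apply: eq_bigr => c _; rewrite vdeg_col_col_mx_proper. Qed.

Lemma col_degs_col_mx_proper : col_degs (col_mx H1 H2) = col_degs H2.
Proof. by apply: eq_map => c; rewrite vdeg_col_col_mx_proper. Qed.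
End ProperStack.

(** * Minimal bases and minimal indices *)

Section MinimalBasis.
Variable F : fieldType.
Local Notation K := {fraction {poly F}}.

Lemma poly_basis_mulmx_unit k l (V : 'cV[K]_k -> Prop) (H H' : 'M[{poly F}]_(k, l))
    (R : 'M[K]_l) :
  R \in unitmx -> toK H' = toK H *m R -> poly_basis V H -> poly_basis V H'.
Proof.
move=> R_unit eH [rkH spanH]; split; first by rewrite eH mxrankMfree ?row_free_unit.
move=> x; rewrite spanH; split=> -[y ->].
  by exists (invmx R *m y); rewrite eH -mulmxA mulKVmx.
by exists (R *m y); rewrite eH mulmxA.
Qed.

(* Exchanging column [j] of [H] for [w] keeps a basis; minimality of the order
   then compares the two degrees. *)
Lemma minimal_basis_exchange k l (V : 'cV[K]_k -> Prop) (H : 'M[{poly F}]_(k, l))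
    (j : 'I_l) (w : 'cV[{poly F}]_k) (y : 'cV[K]_l) :
  minimal_basis V H -> toK w = toK H *m y -> y j 0 != 0 ->
  (vdeg (col j H) <= vdeg w)%N.
Proof.
move=> [H_basis H_min] ew yj0.
set e : 'cV[{poly F}]_l := delta_mx j 0.
set H' := H + (w - H *m e) *m e^T.
have colH' d : col d H' = if d == j then w else col d H.
  apply/matrixP=> i b; rewrite (ord1 b) !mxE big_ord1 -colE !mxE eqxx andbT.
  by case: eqVneq => [->|_]; rewrite ?mxE (mulr1, mulr0) ?addr0 // addrC subrK.
set R := 1%:M + (y - delta_mx j 0) *m (delta_mx j 0)^T.
have eH' : toK H' = toK H *m R.
  rewrite /H' !toKE map_mxD map_mxM map_mxB map_mxM -map_trmx map_delta_mx -!toKE ew.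
  by rewrite mulmxDr mulmx1 mulmxA mulmxBr.
have R_unit : R \in unitmx.
  apply: rank_one_update_unit; rewrite tr_delta_mulmx !mxE !eqxx andbT !mulr1n.
  by rewrite addrCA subrr addr0.
have := H_min _ _ (poly_basis_mulmx_unit R_unit eH' H_basis).
rewrite /order_basis (bigD1 j) //= [X in (_ <= X)%N](bigD1 j) //= colH' eqxx.
suff -> : (\sum_(d < l | d != j) vdeg (col d H') = \sum_(d < l | d != j) vdeg (col d H))%N.
  by rewrite leq_add2r.
by apply: eq_bigr => d /negbTE dj; rewrite colH' dj.
Qed.

Lemma minimal_basis_vdeg_le k l (V : 'cV[K]_k -> Prop) (H : 'M[{poly F}]_(k, l))
    (c : 'I_l) (w : 'cV[{poly F}]_k) (y : 'cV[K]_l) :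
  minimal_basis V H -> toK w = toK H *m y -> y c 0 != 0 ->
  (vdeg (col c H) <= vdeg w)%N.
Proof.
move=> H_min ew yc0.
have [j yj0 j_max] := @arg_maxnP _ c (fun j => y j 0 != 0) (fun j => vdeg (col j H)) yc0.
exact: leq_trans (j_max c yc0) (minimal_basis_exchange H_min ew yj0).
Qed.

(* The columns of [H2] of degree [<= s] are independent and, by
   [minimal_basis_vdeg_le], lie in the span of the columns of [H1] of degree
   [<= s]. *)
Lemma minimal_basis_count_le k l1 l2 (V : 'cV[K]_k -> Prop)
    (H1 : 'M[{poly F}]_(k, l1)) (H2 : 'M[{poly F}]_(k, l2)) s :
  minimal_basis V H1 -> poly_basis V H2 ->
  (#|[pred t | vdeg (col t H2) <= s]| <= #|[pred c | vdeg (col c H1) <= s]|)%N.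
Proof.
move=> H1_min [rk2 span2]; have [[_ span1] _] := H1_min.
set T := [pred t | _]; set S := [pred c | _].
have W2_free : row_free (toK H2)^T by rewrite /row_free mxrank_tr rk2.
suff sub : (rowsub (enum_val : 'I_#|T| -> _) (toK H2)^T
            <= rowsub (enum_val : 'I_#|S| -> _) (toK H1)^T)%MS.
  rewrite -(eqP (row_free_rowsub (@enum_val_inj _ _) W2_free)).
  exact: leq_trans (mxrankS sub) (rank_leq_row _).
apply/row_subP => a; rewrite row_rowsub -tr_col.
have tT : enum_val a \in T := enum_valP a.
have [y ey] : exists y, toK (col (enum_val a) H2) = toK H1 *m y.
  by apply/span1/span2; exists (delta_mx (enum_val a) 0); rewrite !toKE map_col colE.
rewrite -map_col -toKE ey trmx_mul mulmx_sum_row summx_sub // => c _.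
have [cS|cS] := boolP (c \in S).
  by rewrite scalemx_sub // (eq_row_sub (enum_rank_in cS c)) // row_rowsub enum_rankK_in.
suff -> : y^T 0 c = 0 by rewrite scale0r sub0mx.
rewrite mxE; apply: contraNeq cS => yc0; rewrite inE.
exact: leq_trans (minimal_basis_vdeg_le H1_min ey yc0) tT.
Qed.

Lemma minimal_basis_col_degs k l1 l2 (V : 'cV[K]_k -> Prop)
    (H1 : 'M[{poly F}]_(k, l1)) (H2 : 'M[{poly F}]_(k, l2)) :
  minimal_basis V H1 -> minimal_basis V H2 -> perm_eq (col_degs H1) (col_degs H2).
Proof.
have count_col_degs l (H : 'M[{poly F}]_(k, l)) s :
    count (leq^~ s) (col_degs H) = #|[pred c | (vdeg (col c H) <= s)%N]|.
  by rewrite count_map cardE enumT /enum_mem size_filter; apply: eq_count.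
move=> H1_min H2_min; apply: perm_eq_count_leq => s; rewrite !count_col_degs.
apply/eqP; rewrite eqn_leq (minimal_basis_count_le s H2_min (proj1 H1_min)).
by rewrite (minimal_basis_count_le s H1_min (proj1 H2_min)).
Qed.

Lemma poly_basis_null_r_mul0 r k l (G : 'M[K]_(r, k)) (H : 'M[{poly F}]_(k, l)) :
  poly_basis (null_r G) H -> G *m toK H = 0.
Proof.
move=> [_ spanH]; apply/matrixP => i c.
move: (proj2 (spanH _) (ex_intro _ (delta_mx c 0) erefl)).
by rewrite /null_r mulmxA -colE => /matrixP /(_ i 0); rewrite !mxE.
Qed.

Lemma minimal_basis_ext k (V V' : 'cV[K]_k -> Prop) l (H : 'M[{poly F}]_(k, l)) :
  (forall x, V x <-> V' x) -> minimal_basis V H -> minimal_basis V' H.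
Proof.
move=> eV [[rkH spanH] H_min]; split=> [|l' H' [rkH' spanH']].
  by split=> // x; rewrite -eV.
by apply: H_min; split=> // x; rewrite eV.
Qed.

Lemma left_minimal_basis_tr k r (G : 'M[K]_(k, r)) l (H : 'M[{poly F}]_(k, l)) :
  left_minimal_basis G H <-> right_minimal_basis G^T H.
Proof.
have null_tr x : null_l G x <-> null_r G^T x.
  rewrite /null_l /null_r; split=> x0; first by rewrite -[x]trmxK -trmx_mul x0 trmx0.
  by rewrite -[_ *m _]trmxK trmx_mul trmxK x0 trmx0.
by split; apply: minimal_basis_ext => x; rewrite null_tr.
Qed.

Lemma same_left_min_indices_tr k1 m1 k2 m2 (G1 : 'M[K]_(k1, m1)) (G2 : 'M[K]_(k2, m2)) :
  same_right_min_indices G1^T G2^T -> same_left_min_indices G1 G2.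
Proof.
move=> same l1 l2 M1 M2 /left_minimal_basis_tr M1_min /left_minimal_basis_tr.
exact: same.
Qed.
End MinimalBasis.

(** * System matrices *)

Section SystemMatrix.
Variables (F : fieldType) (n m p : nat).
Variables (A : 'M[{poly F}]_n) (B : 'M[{poly F}]_(n, m)).
Variables (C : 'M[{poly F}]_(p, n)) (D : 'M[{poly F}]_(p, m)).
Hypothesis detA : \det A != 0.
Local Notation X := (invmx (toK A) *m toK B).
Local Notation G := (toK D + toK C *m invmx (toK A) *m toK B).
Local Notation PK := (toK (sys_mx A B C D)).

Lemma sys_mx_mul_col_mx_eq0 k (x1 : 'M_(n, k)) (x2 : 'M_(m, k)) :
  PK *m col_mx x1 x2 = 0 <-> x1 = - (X *m x2) /\ G *m x2 = 0.
Proof.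
have A_unit := toK_unitmx detA.
rewrite /sys_mx toKE map_block_mx map_mxN -!toKE mul_block_col; split.
  move/eqP; rewrite col_mx_eq0 => /andP[/eqP eq1 /eqP eq2].
  have ex1 : x1 = - (X *m x2).
    rewrite -(mulKmx A_unit x1) -mulmxA -mulmxN; congr (_ *m _).
    by apply/eqP; rewrite -addr_eq0 eq1.
  by split=> //; move: eq2; rewrite ex1 mulmxN mulNmx opprK mulmxDl !mulmxA addrC.
move=> [-> Gx2]; apply/eqP; rewrite col_mx_eq0; apply/andP; split; apply/eqP.
  by rewrite mulmxN !mulmxA mulmxV // mul1mx addNr.
by rewrite mulmxN mulNmx opprK -Gx2 mulmxDl !mulmxA addrC.
Qed.

Lemma poly_basis_sys_mx l (H1 : 'M[{poly F}]_(n, l)) (H2 : 'M[{poly F}]_(m, l)) :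
  toK H1 = - (X *m toK H2) ->
  poly_basis (null_r PK) (col_mx H1 H2) <-> poly_basis (null_r G) H2.
Proof.
move=> eH1; have eH : toK (col_mx H1 H2) = col_mx (- X) 1%:M *m toK H2.
  by rewrite toKE map_col_mx -!toKE mul_col_mx mul1mx eH1 mulNmx.
rewrite /poly_basis /null_r eH mxrank_col_mx1_mul.
split=> -[rk span]; split=> // x.
- split=> [Gx|[y ->]].
    have /span[y] : PK *m col_mx (- (X *m x)) x = 0 by apply/sys_mx_mul_col_mx_eq0.
    by rewrite !mul_col_mx !mul1mx => /eq_col_mx[_ ->]; exists y.
  have /sys_mx_mul_col_mx_eq0[] // :
      PK *m col_mx (- (X *m (toK H2 *m y))) (toK H2 *m y) = 0.
  by apply/span; exists y; rewrite -[RHS]mulmxA mul_col_mx mul1mx mulNmx.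
- rewrite -[x]vsubmxK; split=> [/sys_mx_mul_col_mx_eq0[-> /span[y ->]]|[y]].
    by exists y; rewrite !mul_col_mx !mul1mx !mulNmx !mulmxA.
  rewrite !mul_col_mx !mul1mx => /eq_col_mx[-> ->]; apply/sys_mx_mul_col_mx_eq0.
  by split; [rewrite !mulNmx !mulmxA | apply/span; exists y].
Qed.

Hypotheses (AC_coprime : right_coprime A C) (X_proper : proper_mx X).

Lemma right_minimal_basis_sys_mx l (H : 'M[{poly F}]_(n + m, l)) :
  right_minimal_basis PK H ->
  right_minimal_basis G (dsubmx H) /\ toK (usubmx H) = - (X *m toK (dsubmx H)).
Proof.
move=> [H_basis H_min]; have := poly_basis_null_r_mul0 H_basis.
rewrite -[H]vsubmxK [toK (col_mx _ _)]toKE map_col_mx -!toKE.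
move=> /sys_mx_mul_col_mx_eq0[]; rewrite vsubmxK => eH1 _.
split=> //; split=> [|l' H2' H2'_basis].
  by apply/(poly_basis_sys_mx eH1); rewrite vsubmxK.
have [H1' eH1'] :=
  right_coprime_poly_state AC_coprime detA (poly_basis_null_r_mul0 H2'_basis).
have := H_min _ _ (proj2 (poly_basis_sys_mx eH1') H2'_basis).
by rewrite -{1}(vsubmxK H) !(order_basis_col_mx_proper X_proper).
Qed.

Lemma same_right_min_indices_sys_mx : same_right_min_indices PK G.
Proof.
move=> l1 l2 M1 M2 /right_minimal_basis_sys_mx[M1_min eM1] M2_min.
rewrite -(vsubmxK M1) (col_degs_col_mx_proper X_proper eM1).
exact: minimal_basis_col_degs M1_min M2_min.
Qed.
End SystemMatrix.

Section DualSystemMatrix.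
Variables (F : fieldType) (n m p : nat).
Variables (A : 'M[{poly F}]_n) (B : 'M[{poly F}]_(n, m)).
Variables (C : 'M[{poly F}]_(p, n)) (D : 'M[{poly F}]_(p, m)).
Local Notation Y := (toK C *m invmx (toK A)).
Local Notation G := (toK D + toK C *m invmx (toK A) *m toK B).
Local Notation PK := (toK (sys_mx A B C D)).

Lemma left_coprime_tr : left_coprime A B -> right_coprime A^T (- B^T).
Proof.
move=> AB_coprime R A' C' eA eC; apply: (AB_coprime R A' (- C') eA).
by rewrite mulNmx -eC opprK.
Qed.

Lemma sys_mx_tr : PK^T = toK (sys_mx A^T (- C^T) (- B^T) D^T).
Proof. by rewrite !toKE map_trmx /sys_mx tr_block_mx opprK linearN. Qed.

Lemma tr_sys_state_map : invmx (toK A^T) *m toK (- C^T) = - Y^T.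
Proof. by rewrite !toKE map_mxN -!map_trmx -trmx_inv mulmxN trmx_mul. Qed.

Lemma tr_sys_transfer :
  toK D^T + toK (- B^T) *m invmx (toK A^T) *m toK (- C^T) = G^T.
Proof.
rewrite -mulmxA tr_sys_state_map !toKE map_mxN -!map_trmx mulNmx mulmxN opprK.
by rewrite linearD /= !trmx_mul mulmxA.
Qed.

Hypotheses (detA : \det A != 0) (AB_coprime : left_coprime A B) (Y_proper : proper_mx Y).

Let detAT : \det A^T != 0. Proof. by rewrite det_tr. Qed.

Let X_proper : proper_mx (invmx (toK A^T) *m toK (- C^T)).
Proof. by rewrite tr_sys_state_map; apply/proper_mxN/proper_mx_tr. Qed.

Lemma left_minimal_basis_sys_mx q (H : 'M[{poly F}]_(n + p, q)) :
  left_minimal_basis PK H ->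
  left_minimal_basis G (dsubmx H) /\ toK (usubmx H) = Y^T *m toK (dsubmx H).
Proof.
move=> /left_minimal_basis_tr; rewrite sys_mx_tr.
move=> /(right_minimal_basis_sys_mx detAT (left_coprime_tr AB_coprime) X_proper).
rewrite tr_sys_transfer tr_sys_state_map mulNmx opprK => -[H2_min ->].
by split=> //; apply/left_minimal_basis_tr.
Qed.

Lemma same_left_min_indices_sys_mx : same_left_min_indices PK G.
Proof.
apply: same_left_min_indices_tr; rewrite sys_mx_tr -tr_sys_transfer.
exact: same_right_min_indices_sys_mx detAT (left_coprime_tr AB_coprime) X_proper.
Qed.
End DualSystemMatrix.

Theorem theorem3p6 (F : fieldType) (n m p : nat)
  (A : 'M[{poly F}]_n) (B : 'M[{poly F}]_(n, m))
  (C : 'M[{poly F}]_(p, n)) (D : 'M[{poly F}]_(p, m))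
  (G : 'M[{fraction {poly F}}]_(p, m)) :
  is_system_matrix_of A B C D G ->
  (* (a) *)
  (right_coprime A C -> proper_mx (invmx (toK A) *m toK B) ->
   forall (l : nat) (H : 'M[{poly F}]_(n + m, l)),
     right_minimal_basis (toK (sys_mx A B C D)) H ->
     right_minimal_basis G (dsubmx H) /\
     toK (usubmx H) = - (invmx (toK A) *m toK B *m toK (dsubmx H)) /\
     same_right_min_indices (toK (sys_mx A B C D)) G)
  /\
  (* (b) *)
  (left_coprime A B -> proper_mx (toK C *m invmx (toK A)) ->
   forall (q : nat) (H : 'M[{poly F}]_(n + p, q)),
     left_minimal_basis (toK (sys_mx A B C D)) H ->
     left_minimal_basis G (dsubmx H) /\
     toK (usubmx H) = (toK C *m invmx (toK A))^T *m toK (dsubmx H) /\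
     same_left_min_indices (toK (sys_mx A B C D)) G).
Proof.
move=> [detA ->]; split=> [AC_coprime X_proper l H H_min | AB_coprime Y_proper q H H_min].
  have [H2_min eH1] := right_minimal_basis_sys_mx detA AC_coprime X_proper H_min.
  by split=> //; split=> //; apply: same_right_min_indices_sys_mx.
have [H2_min eH1] := left_minimal_basis_sys_mx detA AB_coprime Y_proper H_min.
by split=> //; split=> //; apply: same_left_min_indices_sys_mx.
Qed.
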